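(* Let $\{i,j,k\}=\{1,2,3\}$ and $n\ge0$. Then: 1. The atomic element $a^{ij}_n$ is $\varphi_i$-homomorphic and $\varphi_j$-homomorphic. 2. The atomic element $A^{ij}_n$ is $\varphi_i$-homomorphic. 3. The atomic element $A^{ij}_n$ is $(\varphi_j,y_k)$-homomorphic.
   Context: $D^{2,2,2}$ is the modular lattice generated by $x_1,y_1,x_2,y_2,x_3,y_3$ subject only to $x_i\subseteq y_i$ ($i=1,2,3$), with a greatest element $I$ adjoined. Meet is written $ab$, join $a+b$. Atomic elements: for distinct $i,j$, let $k$ denote the third index. Define - $a^{ij}_0=I$ and $a^{ij}_n=x_i+y_ja^{jk}_{n-1}$ for $n\ge1$; - $A^{ij}_0=I$ and $A^{ij}_n=y_i+x_jA^{ki}_{n-1}$ for $n\ge1$. A representation $\rho$ of $D^{2,2,2}$ in a finite-dimensional vector space $X_0$ is a lattice morphism from $D^{2,2,2}$ to the subspace lattice of $X_0$, with $\rho(I)=X_0$. Write $X_i=\rho(x_i)\subseteq Y_i=\rho(y_i)$. Put $R=Y_1\oplus Y_2\oplus Y_3$ and $X^1_0=\{(\eta_1,\eta_2,\eta_3)\in R:\sum\eta_i=0\}$. Let $G'_i\subseteq R$ be the triples with $i$-th coordinate in $X_i$, and $H'_i\subseteq R$ the triples with $i$-th coordinate $0$. $\Phi^+\rho$ is the representation in $X^1_0$ with $\Phi^+\rho(y_i)=G'_i\cap X^1_0$, $\Phi^+\rho(x_i)=H'_i\cap X^1_0$, $\Phi^+\rho(I)=X^1_0$. The elementary map $\varphi_i:X^1_0\to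 X_0$ is $(\eta_1,\eta_2,\eta_3)\mapsto\eta_i$; $\varphi_i(S)$ denotes the image of a subspace $S$. An element $a\in D^{2,2,2}$ is $\varphi_i$-homomorphic if, for every representation $\rho$ and every $p\in D^{2,2,2}$, $$\varphi_i(\Phi^+\rho(ap))=\varphi_i(\Phi^+\rho(a))\cap\varphi_i(\Phi^+\rho(p)).$$ An element $a$ is $(\varphi_i,y_k)$-homomorphic if, for every representation $\rho$ and every $p\in D^{2,2,2}$ with $p\subseteq y_k$, $$\varphi_i(\Phi^+\rho(ap))=\varphi_i(\Phi^+\rho(y_ka))\cap\varphi_i(\Phi^+\rho(p)).$$ *)

From HB Require Import structures.
From mathcomp Require Import all_boot all_algebra.

Set Implicit Arguments.
Unset Strict Implicit.
Unset Printing Implicit Defensive.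

Import GRing.Theory.
Local Open Scope ring_scope.

(* Terms over the generators x_1,y_1,x_2,y_2,x_3,y_3 and the adjoined  *)
(* top element I (indices 1,2,3 are the ordinals 0,1,2 of 'I_3).       *)
Inductive term : Type :=
| Gx of 'I_3
| Gy of 'I_3
| Top
| Meet of term & term
| Join of term & term .

(* Equality in D^{2,2,2} (with I adjoined): the least congruence on     *)
(* terms containing the modular-lattice axioms, the relations          *)
(* x_i <= y_i, and the axiom that I is the greatest element.           *)
Inductive eqD : term -> term -> Prop :=
| eqD_refl a : eqD a a
| eqD_sym a b : eqD a b -> eqD b a
| eqD_trans a b c : eqD a b -> eqD b c -> eqD a c
| eqD_Meet a a' b b' : eqD a a' -> eqD b b' -> eqD (Meet a b) (Meet a' b')
| eqD_Join a a' b b' : eqD a a' -> eqD b b' -> eqD (Join a b) (Join a' b')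
| eqD_MeetC a b : eqD (Meet a b) (Meet b a)
| eqD_JoinC a b : eqD (Join a b) (Join b a)
| eqD_MeetA a b c : eqD (Meet a (Meet b c)) (Meet (Meet a b) c)
| eqD_JoinA a b c : eqD (Join a (Join b c)) (Join (Join a b) c)
| eqD_MeetJ a b : eqD (Meet a (Join a b)) a
| eqD_JoinM a b : eqD (Join a (Meet a b)) a
| eqD_modular a b c :
    eqD (Join (Meet a b) (Meet a c)) (Meet a (Join b (Meet a c)))
| eqD_xy i : eqD (Meet (Gx i) (Gy i)) (Gx i)
| eqD_top a : eqD (Meet a Top) a.

Definition leD (p q : term) : Prop := eqD (Meet p q) p.

(* Atomic elements.  For distinct i, j with third index k:              *)
(*   a_at n i j k = a^{ij}_n,  A_at n i j k = A^{ij}_n.                  *)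
(* (the third index of (j,k) is i, that of (k,i) is j)                  *)
Fixpoint a_at (n : nat) (i j k : 'I_3) : term :=
  match n with
  | 0 => Top
  | n'.+1 => Join (Gx i) (Meet (Gy j) (a_at n' j k i))
  end.

Fixpoint A_at (n : nat) (i j k : 'I_3) : term :=
  match n with
  | 0 => Top
  | n'.+1 => Join (Gy i) (Meet (Gx j) (A_at n' k i j))
  end.

(* Evaluation of terms in a subspace lattice: [top] is the space in     *)
(* which the representation lives, [gx]/[gy] the images of x_i / y_i.  *)
Fixpoint eval (F : fieldType) (vT : vectType F) (top : {vspace vT})
    (gx gy : 'I_3 -> {vspace vT}) (t : term) : {vspace vT} :=
  match t with
  | Gx i => gx i
  | Gy i => gy i
  | Top => top
  | Meet a b => (eval top gx gy a :&: eval top gx gy b)%VS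
  | Join a b => (eval top gx gy a + eval top gx gy b)%VS
  end.

(* the representation rho in X_0 = fullv with rho(x_i)=X i, rho(y_i)=Y i *)
Definition rep_eval (F : fieldType) (vT : vectType F)
    (X Y : 'I_3 -> {vspace vT}) (t : term) : {vspace vT} :=
  eval fullv X Y t.

(* The construction Phi^+ : everything lives in X_0 ⊕ X_0 ⊕ X_0.       *)
Section PhiPlus.
Variables (F : fieldType) (vT : vectType F).

Definition triple : vectType F := (vT * vT * vT)%type.

Definition coord3 (l : 'I_3) (w : triple) : vT :=
  match val l with
  | 0 => w.1.1
  | 1 => w.1.2
  | _ => w.2
  end.

Definition varphi (l : 'I_3) : 'Hom(triple, vT) := linfun (coord3 l).

Definition sum3 : 'Hom(triple, vT) := linfun (fun w : triple => w.1.1 + w.1.2 + w.2).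

Variables (X Y : 'I_3 -> {vspace vT}).

(* R = Y_1 ⊕ Y_2 ⊕ Y_3 *)
Definition Rsp : {vspace triple} := (\bigcap_(l < 3) (varphi l @^-1: Y l))%VS.
Definition X10 : {vspace triple} := (Rsp :&: lker sum3)%VS.
Definition Gp (l : 'I_3) : {vspace triple} := (Rsp :&: (varphi l @^-1: X l))%VS.
Definition Hp (l : 'I_3) : {vspace triple} := (Rsp :&: lker (varphi l))%VS.

Definition PhiPlus (t : term) : {vspace triple} :=
  eval X10 (fun l => Hp l :&: X10)%VS (fun l => Gp l :&: X10)%VS t.

End PhiPlus.

Arguments varphi {F vT} l.
Arguments PhiPlus {F vT} X Y t.

Definition phi_hom (i : 'I_3) (a : term) : Prop :=
  forall (F : fieldType) (vT : vectType F) (X Y : 'I_3 -> {vspace vT}),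
    (forall l, (X l <= Y l)%VS) ->
    forall p : term,
      (varphi i @: PhiPlus X Y (Meet a p))%VS =
      ((varphi i @: PhiPlus X Y a) :&: (varphi i @: PhiPlus X Y p))%VS.

Definition phi_y_hom (i k : 'I_3) (a : term) : Prop :=
  forall (F : fieldType) (vT : vectType F) (X Y : 'I_3 -> {vspace vT}),
    (forall l, (X l <= Y l)%VS) ->
    forall p : term, leD p (Gy k) ->
      (varphi i @: PhiPlus X Y (Meet a p))%VS =
      ((varphi i @: PhiPlus X Y (Meet (Gy k) a)) :&: (varphi i @: PhiPlus X Y p))%VS.

(* Phi^+ rho(x_l) is exactly the part of X^1_0 killed by varphi_l, so varphi_l
   is injective modulo any Phi^+ rho-subspace containing Phi^+ rho(x_l); on
   such a subspace it therefore commutes with intersections.  Each atomic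
   element in the statement contains the relevant x_l (for the
   (varphi_j, y_k) case, contains x_j y_k, which is enough below y_k), and
   these inclusions hold in every subspace lattice and for arbitrary indices,
   so the distinctness of i, j, k is never used. *)

From mathcomp Require Import all_boot all_algebra.

Set Implicit Arguments.
Unset Strict Implicit.
Unset Printing Implicit Defensive.
Import GRing.Theory.
Local Open Scope ring_scope.

Section SubspaceLattice.
Variables (F : fieldType) (vT : vectType F).
Variables (top : {vspace vT}) (gx gy : 'I_3 -> {vspace vT}).
Hypothesis gx_sub_gy : forall l, (gx l <= gy l)%VS.
Hypothesis gy_sub_top : forall l, (gy l <= top)%VS.

Lemma eval_sub_top t : (eval top gx gy t <= top)%VS.
Proof.
elim: t => [l|l| |a le_a b _|a le_a b le_b] /=.
- exact: subv_trans (gx_sub_gy l) (gy_sub_top l).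
- exact: gy_sub_top.
- exact: subvv.
- exact: subv_trans (capvSl _ _) le_a.
- by rewrite subv_add le_a le_b.
Qed.

Lemma eval_eqD a b : eqD a b -> eval top gx gy a = eval top gx gy b.
Proof.
elim=> {a b} /=; try by move=> *; congruence.
- by move=> a b; rewrite capvC.
- by move=> a b; rewrite addvC.
- by move=> a b c; rewrite capvA.
- by move=> a b c; rewrite addvA.
- by move=> a b; apply/eqP; rewrite eqEsubv capvSl subv_cap subvv addvSl.
- by move=> a b; apply/eqP; rewrite eqEsubv addvSl subv_add subvv capvSl.
- by move=> a b c; rewrite vspace_modr ?capvSl.
- by move=> l; apply/eqP; rewrite eqEsubv capvSl subv_cap subvv gx_sub_gy.
- by move=> a; apply/eqP; rewrite eqEsubv capvSl subv_cap subvv eval_sub_top.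
Qed.

End SubspaceLattice.

Definition subspace_le (a b : term) : Prop :=
  forall (F : fieldType) (vT : vectType F) (top : {vspace vT})
         (gx gy : 'I_3 -> {vspace vT}),
    (forall l, gx l <= gy l)%VS -> (forall l, gy l <= top)%VS ->
    (eval top gx gy a <= eval top gx gy b)%VS.

Lemma subspace_le_Gx_a_at n i j k : subspace_le (Gx i) (a_at n i j k).
Proof.
move=> F vT top gx gy gx_sub_gy gy_sub_top.
by case: n => [|n] /=; [exact: (eval_sub_top _ _ (Gx i)) | exact: addvSl].
Qed.

Lemma subspace_le_Gx_a_at_next n i j k : subspace_le (Gx j) (a_at n i j k).
Proof.
move=> F vT top gx gy gx_sub_gy gy_sub_top.
case: n => [|n] /=; first exact: (eval_sub_top _ _ (Gx j)).
apply: subv_trans (addvSr _ _); rewrite subv_cap gx_sub_gy.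
exact: subspace_le_Gx_a_at.
Qed.

Lemma subspace_le_Gy_A_at n i j k : subspace_le (Gy i) (A_at n i j k).
Proof.
move=> F vT top gx gy gx_sub_gy gy_sub_top.
by case: n => [|n] /=; [exact: gy_sub_top | exact: addvSl].
Qed.

Lemma subspace_le_Gx_A_at n i j k : subspace_le (Gx i) (A_at n i j k).
Proof.
move=> F vT top gx gy gx_sub_gy gy_sub_top.
exact: subv_trans (gx_sub_gy i) (subspace_le_Gy_A_at _ _ _ _ gx_sub_gy gy_sub_top).
Qed.

Lemma subspace_le_GxGy_A_at n i j k :
  subspace_le (Meet (Gx j) (Gy k)) (A_at n i j k).
Proof.
move=> F vT top gx gy gx_sub_gy gy_sub_top.
case: n => [|n] /=; first exact: subv_trans (capvSl _ _) (subv_trans (gx_sub_gy j) _).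
apply: subv_trans (addvSr _ _); apply: capvS (subvv _) _.
exact: (subspace_le_Gy_A_at n k i j).
Qed.

Lemma limg_capE (F : fieldType) (aT rT : vectType F) (f : 'Hom(aT, rT))
    (U V W : {vspace aT}) :
  (U <= W)%VS -> (V <= W)%VS -> (lker f :&: W <= U)%VS ->
  (f @: (U :&: V))%VS = (f @: U :&: f @: V)%VS.
Proof.
move=> sUW sVW sKU; apply/eqP; rewrite eqEsubv limg_cap /=.
apply/subvP => _ /memv_capP [/memv_imgP [u uU ->] /memv_imgP [v vV fuv]].
have uvU : u - v \in U.
  apply: (subvP sKU); rewrite memv_cap memv_ker raddfB /= fuv subrr eqxx /=.
  by rewrite rpredB ?(subvP sUW _ uU) ?(subvP sVW _ vV).
have vU : v \in U by rewrite -[v](subKr u) rpredB.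
by rewrite fuv memv_img // memv_cap vU.
Qed.

Section PhiPlusFacts.
Variables (F : fieldType) (vT : vectType F) (X Y : 'I_3 -> {vspace vT}).

Lemma PhiPlus_Gx_sub_Gy l : (PhiPlus X Y (Gx l) <= PhiPlus X Y (Gy l))%VS.
Proof. by rewrite capvS // capvS // -lpreim0 lpreimS ?sub0v. Qed.

Lemma PhiPlus_Gy_sub_Top l : (PhiPlus X Y (Gy l) <= PhiPlus X Y Top)%VS.
Proof. exact: capvSr. Qed.

Lemma lker_varphi_cap_sub l :
  (lker (varphi l) :&: PhiPlus X Y Top <= PhiPlus X Y (Gx l))%VS.
Proof.
rewrite /PhiPlus /= subv_cap capvSr andbT subv_cap capvSl andbT.
exact: subv_trans (capvSr _ _) (capvSl _ _).
Qed.

End PhiPlusFacts.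

Lemma phi_hom_of_subspace_le l a : subspace_le (Gx l) a -> phi_hom l a.
Proof.
move=> le_xa F vT X Y _ p.
have hxy := PhiPlus_Gx_sub_Gy X Y; have hyt := PhiPlus_Gy_sub_Top X Y.
apply: (limg_capE (W := PhiPlus X Y Top)); try exact: eval_sub_top.
exact: subv_trans (lker_varphi_cap_sub X Y l) (le_xa _ _ _ _ _ hxy hyt).
Qed.

Lemma phi_y_hom_of_subspace_le j k a :
  subspace_le (Meet (Gx j) (Gy k)) a -> phi_y_hom j k a.
Proof.
move=> le_xya F vT X Y _ p le_py.
have hxy := PhiPlus_Gx_sub_Gy X Y; have hyt := PhiPlus_Gy_sub_Top X Y.
set A := PhiPlus X Y a; set G := PhiPlus X Y (Gy k); set P := PhiPlus X Y p.
have PG : (P :&: G = P)%VS := eval_eqD hxy hyt le_py.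
have xGA : (PhiPlus X Y (Gx j) :&: G <= A)%VS := le_xya _ _ _ _ _ hxy hyt.
change (varphi j @: (A :&: P) = varphi j @: (G :&: A) :&: varphi j @: P)%VS.
have ker_sub_G : (lker (varphi j) :&: G <= PhiPlus X Y (Gx j) :&: G)%VS.
  rewrite subv_cap capvSr andbT; apply: subv_trans (lker_varphi_cap_sub X Y j).
  exact: capvS (subvv _) (hyt k).
clearbody A G P.
have -> : (A :&: P = G :&: A :&: P)%VS by rewrite (capvC G) -capvA (capvC G) PG.
apply: (limg_capE (W := G)); first exact: capvSl.
  by rewrite -PG capvSr.
by rewrite subv_cap capvSr (subv_trans ker_sub_G xGA).
Qed.

Theorem mainTheorem11 (i j k : 'I_3) (n : nat) :
  i != j -> j != k -> i != k ->
  [/\ phi_hom i (a_at n i j k), phi_hom j (a_at n i j k),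
      phi_hom i (A_at n i j k) & phi_y_hom j k (A_at n i j k)].
Proof.
move=> _ _ _; split.
- exact/phi_hom_of_subspace_le/subspace_le_Gx_a_at.
- exact/phi_hom_of_subspace_le/subspace_le_Gx_a_at_next.
- exact/phi_hom_of_subspace_le/subspace_le_Gx_A_at.
- exact/phi_y_hom_of_subspace_le/subspace_le_GxGy_A_at.
Qed.
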